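(* For every $\delta>0$ and $n\in\mathbb{N}$ there exists $N\in\mathbb{N}$ such that the following holds for every $N$-partitioned hypergraph $H$ and every choice of subsets $X_{ijk\ell}\subseteq V_{jk}$, for $i<j<k<\ell$, $i,j,k,\ell\in[N]$, with $|X_{ijk\ell}|\ge\delta|V_{jk}|$: there exist an induced $n$-partitioned subhypergraph $H'$ of $H$ with index set $I\subseteq[N]$ and vertices $\omega_{jk}\in V_{jk}$, $j<k$, $j,k\in I$, such that $\omega_{jk}\in X_{ijk\ell}$ for all $i,\ell\in I$ with $i<j<k<\ell$.
   Context: An $n$-partitioned hypergraph $H$ is a finite $3$-uniform hypergraph whose vertex set is partitioned into nonempty sets $V_{ij}$, $1\le i<j\le n$, such that every edge has, for some $1\le i<j<k\le n$, exactly one vertex in each of $V_{ij}$, $V_{ik}$, $V_{jk}$. For $I\subseteq[n]$, the induced subhypergraph with index set $I$ is the $|I|$-partitioned hypergraph with parts $V_{ij}$, $i<j$, $i,j\in I$ (indexed by elements of $I$) and all edges of $H$ contained in the union of these parts. *)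

From HB Require Import structures.
From mathcomp Require Import all_boot all_order all_algebra.
From mathcomp Require Import reals.
Set Implicit Arguments. Unset Strict Implicit. Unset Printing Implicit Defensive.
Import Order.TTheory GRing.Theory Num.Theory.

(* Indices [N] are rendered as 'I_N (0-based; only the order matters).
   V i j is the part V_{ij}; only the values with i < j are meaningful. *)
Definition partitioned_hypergraph (T : finType) (N : nat)
    (V : 'I_N -> 'I_N -> {set T}) (E : {set {set T}}) : Prop :=
  (forall i j : 'I_N, i < j -> V i j != set0) /\
  (forall x : T, exists! p : 'I_N * 'I_N, p.1 < p.2 /\ x \in V p.1 p.2) /\
  (forall e, e \in E -> exists i j k : 'I_N, [/\ i < j, j < k &
     exists a b c, [/\ a \in V i j, b \in V i k, c \in V j k &
                       e = [set a; b; c]]]).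

Definition induced_edges (T : finType) (N : nat)
    (V : 'I_N -> 'I_N -> {set T}) (E : {set {set T}}) (I : {set 'I_N}) :
    {set {set T}} :=
  [set e in E | e \subset \bigcup_(i in I) \bigcup_(j in I | i < j) V i j].

From HB Require Import structures.
From mathcomp Require Import all_boot all_order all_algebra.
From mathcomp Require Import reals.
From mathcomp Require Import zify.
Import Order.TTheory GRing.Theory Num.Theory.
Set Implicit Arguments. Unset Strict Implicit. Unset Printing Implicit Defensive.

(* Colour each increasing sequence [S ++ j :: k :: R] of 2n+2 indices, with |S| = |R| = n, by
   whether a single vertex of V_jk lies in every X_ijkl, i in S, l in R.  By the hypergraph
   Ramsey theorem a long enough index range contains a sequence t on which this colouring is
   constant.  The constant colour cannot be "no": with K >= 1/delta, put 2Kn indices A of t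
   before some j < k of t and very many indices B after them; averaging gives a vertex of V_jk
   lying in a 1/K fraction of the sets X_ijkl, (i, l) in A x B, and a Kovari-Sos-Turan count
   turns these incidences into an n x n rectangle S x R.  Hence the colour is "yes", and the
   middle third of t is the required index set: for j < k in it, t has n indices below j
   and n above k that include all those of the middle third. *)

Definition monochromatic (T : eqType) (c : seq T -> bool) (r : nat) (t : seq T) (b : bool) :=
  forall u, subseq u t -> size u = r -> c u = b.

Definition arrows (M m r : nat) :=
  forall (T : eqType) (c : seq T -> bool) (s : seq T), M <= size s ->
  exists t b, [/\ subseq t s, size t = m & monochromatic c r t b].

Fixpoint prehomogeneous (T : eqType) (c : seq T -> bool) (r : nat) (xs : seq (T * bool)) :=
  if xs is (x, b) :: xs' then
    monochromatic (fun u => c (x :: u)) r (unzip1 xs') b /\ prehomogeneous c r xs'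
  else True.

Lemma prehomogeneous_monochromatic (T : eqType) (c : seq T -> bool) r xs b :
  prehomogeneous c r xs -> monochromatic c r.+1 (unzip1 [seq p <- xs | p.2 == b]) b.
Proof.
elim: xs => [|[x b'] xs IHxs] /=; first by move=> _ u; rewrite subseq0 => /eqP ->.
case=> x_mono /IHxs xs_mono.
case: (eqVneq b' b) => [b'b|_] /=; last exact: xs_mono.
subst b => -[|y u] //=.
have subxs := subseq_trans _ (map_subseq fst (filter_subseq _ xs)).
case: eqP => [->|_] u_sub [u_size]; first exact: x_mono (subxs _ _ u_sub) u_size.
by apply: xs_mono => //=; rewrite u_size.
Qed.

Lemma exists_prehomogeneous r : (forall m, exists M, arrows M m r) ->
  forall L, exists M, forall (T : eqType) (c : seq T -> bool) (s : seq T), M <= size s ->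
  exists xs, [/\ size xs = L, subseq (unzip1 xs) s & prehomogeneous c r xs].
Proof.
move=> ramsey_r; elim=> [|L [ML IHL]].
  by exists 0 => T c s _; exists [::]; rewrite sub0seq.
have [M' arrowsM'] := ramsey_r ML.
exists M'.+1 => T c [|x s] //= s_size.
have [t [b [ts t_size t_mono]]] := arrowsM' T (fun u => c (x :: u)) s s_size.
have [xs [xs_size xs_t xs_pre]] := IHL T c t (eq_leq (esym t_size)).
exists ((x, b) :: xs); split=> /=; first by rewrite xs_size.
  by rewrite eqxx (subseq_trans xs_t).
by split=> // u u_xs; apply/t_mono/(subseq_trans u_xs).
Qed.

Lemma ramsey r m : exists M, arrows M m r.
Proof.
elim: r m => [|r IHr] m.
  exists m => T c s s_size; exists (take m s), (c [::]).
  by rewrite take_subseq size_takel //; split=> // u _ /size0nil ->.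
have [M preM] := exists_prehomogeneous IHr (m + m).
exists M => T c s s_size.
have [xs [xs_size xs_s xs_pre]] := preM T c s s_size.
have [b mb] : exists b, m <= count (fun p : T * bool => p.2 == b) xs.
  have : count (fun p : T * bool => p.2 == true) xs
         + count (fun p : T * bool => p.2 == false) xs = m + m.
    rewrite -xs_size -(count_predC (fun p : T * bool => p.2 == true)).
    by congr (_ + _); apply: eq_count => -[? []].
  case: (leqP m (count (fun p : T * bool => p.2 == true) xs)) => [|lt_m count_eq].
    by exists true.
  by exists false; lia.
exists (take m (unzip1 [seq p <- xs | p.2 == b])), b; split.
- apply: subseq_trans (take_subseq _ _) (subseq_trans _ xs_s).
  exact/map_subseq/filter_subseq.
- by rewrite size_takel // size_map size_filter.
- move=> u u_sub; apply: prehomogeneous_monochromatic xs_pre _ _.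
  exact: subseq_trans u_sub (take_subseq _ _).
Qed.

Lemma count_fibers (X : Type) (F : finType) (g : X -> F) (P : pred X) (s : seq X) :
  count P s = \sum_(y : F) count (fun x => P x && (g x == y)) s.
Proof.
elim: s => [|x s IHs] /=; first by rewrite big1.
rewrite big_split /= -IHs (bigD1 (g x)) //= eqxx andbT big1 ?addn0 // => y.
by rewrite eq_sym => /negbTE ->; rewrite andbF.
Qed.

Lemma pigeonhole_count (X : Type) (F : finType) (g : X -> F) (P : pred X) (s : seq X) k :
  k * #|F| < count P s -> exists y, k < count (fun x => P x && (g x == y)) s.
Proof.
move=> many; apply/existsP; move: many; apply: contraLR => /existsPn small.
rewrite -leqNgt (count_fibers g) mulnC -sum_nat_const.
by apply: leq_sum => y _; rewrite leqNgt small.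
Qed.

Lemma exists_ge_average (U : finType) (D : {set U}) (f : U -> nat) c :
  D != set0 -> #|D| * c <= \sum_(w in D) f w -> exists2 w, w \in D & c <= f w.
Proof.
move=> /set0Pn[w0 w0D] big_sum; apply/exists_inP; move: big_sum.
apply: contraLR => /exists_inPn small; rewrite -ltnNge.
have lt_c w : w \in D -> f w < c by move/small; rewrite ltnNge.
rewrite -sum_nat_const (bigD1 w0) //= [X in _ < X](bigD1 w0) //=.
by rewrite -addSn leq_add ?lt_c // leq_sum // => w /andP[/lt_c /ltnW].
Qed.

Lemma exists_rich_point (I : eqType) (U : finType) (D : {set U}) (Y : I -> {set U}) (s : seq I)
    K :
  D != set0 -> {in s, forall p, Y p \subset D /\ #|D| <= K * #|Y p|} ->
  exists2 w, w \in D & size s <= K * count (fun p => w \in Y p) s.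
Proof.
move=> D_neq0 Y_dense; apply: exists_ge_average D_neq0 _.
rewrite -big_distrr /=.
have -> : \sum_(w in D) count (fun p => w \in Y p) s = \sum_(p <- s) #|Y p|.
  rewrite (eq_bigr (fun w => \sum_(p <- s) (if w \in Y p then 1 else 0))) => [|w _].
    rewrite exchange_big !big_seq; apply: eq_bigr => p ps.
    rewrite -big_mkcondr -sum1_card; apply: eq_bigl => w /=.
    by rewrite andb_idl // => /(subsetP (proj1 (Y_dense p ps))).
  by rewrite -big_mkcond sum1_count.
rewrite -[size s]count_predT -sum1_count !big_distrr /= !big_seq.
by apply: leq_sum => p ps; rewrite muln1; case: (Y_dense p ps).
Qed.

Lemma dense_bipartite_rectangle (I J : eqType) (e : I -> J -> bool) (A : seq I) (B : seq J) K n :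
  0 < K -> 2 * K * n <= size A -> 2 * K * ((n - 1) * 2 ^ size A) < size B ->
  size A * size B <= K * count (fun p => e p.1 p.2) [seq (i, l) | l <- B, i <- A] ->
  exists S R, [/\ subseq S A, subseq R B, size S = n, size R = n
                 & {in S & R, forall i l, e i l}].
Proof.
move=> K_gt0 A_size B_size dense.
have [->|n_gt0] := posnP n; first by exists [::], [::]; rewrite !sub0seq.
pose deg l := count (e^~ l) A; pose heavy l := n <= deg l.
have deg_sum : \sum_(l <- B) deg l <= size A * count heavy B + (n - 1) * size B.
  apply: (@leq_trans (\sum_(l <- B) ((if heavy l then size A else 0) + (n - 1)))).
    apply: leq_sum => l _; rewrite /heavy; case: (leqP n (deg l)) => [_|small]; last by lia.
    by rewrite (leq_trans (count_size _ _)) ?leq_addr.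
  by rewrite big_split -big_mkcond /= !big_const_seq !iter_addn_0 count_predT.
have many_heavy : (n - 1) * 2 ^ size A < count heavy B.
  have incidences :
      count (fun p => e p.1 p.2) [seq (i, l) | l <- B, i <- A] = \sum_(l <- B) deg l.
    by rewrite count_flatten sumnE !big_map; apply: eq_bigr => l _; rewrite count_map.
  move: dense deg_sum; rewrite incidences; set g := \sum_(l <- B) _ => dense deg_sum.
  (* Otherwise the heavy columns would carry fewer than |A| |B| / K incidences. *)
  rewrite ltnNge; apply/negP => few.
  have : 2 * K * count heavy B < size B.
    by apply: leq_ltn_trans B_size; rewrite leq_mul2l few orbT.
  nia.
pose pattern l : (size A).-tuple bool := map_tuple (e^~ l) (in_tuple A).
have [p p_many] : exists p, n - 1 < count (fun l => heavy l && (pattern l == p)) B.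
  by apply: pigeonhole_count; rewrite card_tuple card_bool.
pose R := take n [seq l <- B | heavy l && (pattern l == p)].
have R_size : size R = n by rewrite size_takel // size_filter; lia.
have /hasP[l0 /mem_take] : has predT R by rewrite has_predT R_size.
rewrite mem_filter => /andP[/andP[heavy_l0 /eqP pattern_l0] _] _.
exists (take n [seq i <- A | e i l0]), R; split.
- exact: subseq_trans (take_subseq _ _) (filter_subseq _ _).
- exact: subseq_trans (take_subseq _ _) (filter_subseq _ _).
- by rewrite size_takel // size_filter.
- exact: R_size.
move=> i l /mem_take; rewrite mem_filter => /andP[e_il0 iA].
move=> /mem_take; rewrite mem_filter => /andP[/andP[_ /eqP pattern_l] _].
have /eq_in_map same : map (e^~ l) A = map (e^~ l0) A.
  by move: (congr1 val pattern_l) (congr1 val pattern_l0) => /= -> ->.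
by rewrite same.
Qed.

Section SortedWindow.

Variables (T : eqType) (r : rel T).
Hypotheses (r_trans : transitive r) (r_irr : irreflexive r).

Lemma sorted_cat_cons_bounds A x B :
  sorted r (A ++ x :: B) -> {in A, forall y, r y x} /\ {in B, forall y, r x y}.
Proof.
rewrite sorted_pairwise // pairwise_cat /= => /and3P[/allrelP AxB _ /andP[/allP xB _]].
by split=> // y yA; apply: AxB; rewrite ?mem_head.
Qed.

Lemma mem_sorted_prefix A x B y :
  sorted r (A ++ x :: B) -> y \in A ++ x :: B -> r y x -> y \in A.
Proof.
move=> /sorted_cat_cons_bounds[_ xB]; rewrite mem_cat inE => /or3P[//|/eqP->|/xB xy yx].
  by rewrite r_irr.
by have := r_trans xy yx; rewrite r_irr.
Qed.

Lemma mem_sorted_suffix A x B y :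
  sorted r (A ++ x :: B) -> y \in A ++ x :: B -> r x y -> y \in B.
Proof.
move=> /sorted_cat_cons_bounds[Ax _]; rewrite mem_cat inE => /or3P[/Ax yx xy|/eqP->|//].
  by have := r_trans xy yx; rewrite r_irr.
by rewrite r_irr.
Qed.

Lemma sorted_window n L M R j k :
  sorted r (L ++ M ++ R) -> size L = n -> size M <= n -> n <= size R ->
  j \in M -> k \in M -> r j k ->
  exists S R', [/\ subseq (S ++ j :: k :: R') (L ++ M ++ R), size S = n, size R' = n,
    {in M, forall i, r i j -> i \in S} & {in M, forall l, r k l -> l \in R'}].
Proof.
move=> sorted_t L_size M_size R_size jM kM jk.
have sorted_M :=
  subseq_sorted r_trans (subseq_trans (prefix_subseq M R) (suffix_subseq L _)) sorted_t.
case/splitPr: jM kM sorted_M M_size => M1 M2 kM sorted_M M_size.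
have /splitPr kM2 := mem_sorted_suffix sorted_M kM jk.
case: {kM}kM2 sorted_M M_size => M3 M4 sorted_M M_size.
rewrite size_cat /= size_cat /= in M_size.
exists (drop (size M1) L ++ M1), (M4 ++ take (n - size M4) R); split.
- rewrite -!catA; apply: cat_subseq (drop_subseq _ _) _.
  apply: cat_subseq (subseq_refl M1) _; rewrite /= eqxx -catA.
  apply: subseq_trans (suffix_subseq M3 _); rewrite /= eqxx.
  exact: cat_subseq (subseq_refl M4) (take_subseq _ _).
- by rewrite size_cat size_drop; lia.
- by rewrite size_cat size_takel; lia.
- by move=> i iM ij; rewrite mem_cat (mem_sorted_prefix sorted_M iM ij) orbT.
have M_eq : M1 ++ j :: M3 ++ k :: M4 = (M1 ++ j :: M3) ++ k :: M4 by rewrite -catA.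
move=> l; rewrite M_eq in sorted_M * => lM kl.
by rewrite mem_cat (mem_sorted_suffix sorted_M lM kl).
Qed.

End SortedWindow.

Section Bridges.

Variables (T : finType) (N : nat).
Variables (V : 'I_N -> 'I_N -> {set T}) (X : 'I_N -> 'I_N -> 'I_N -> 'I_N -> {set T}).

Definition bridge (A B : {pred 'I_N}) (j k : 'I_N) (w : T) : bool :=
  (w \in V j k) && [forall i in A, forall l in B, w \in X i j k l].

Lemma bridgeP A B j k w :
  reflect (w \in V j k /\ {in A & B, forall i l, w \in X i j k l}) (bridge A B j k w).
Proof.
apply: (iffP andP) => -[wV wX]; split=> //.
  by move=> i l iA lB; move/forall_inP: wX => /(_ i iA)/forall_inP; apply.
by apply/forall_inP => i iA; apply/forall_inP => l lB; apply: wX.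
Qed.

Definition bridged (n : nat) (u : seq 'I_N) : bool :=
  if drop n u is j :: k :: R then [exists w, bridge [in take n u] [in R] j k w] else false.

Lemma bridged_cat S j k R :
  bridged (size S) (S ++ j :: k :: R) = [exists w, bridge [in S] [in R] j k w].
Proof. by rewrite /bridged drop_size_cat // take_size_cat. Qed.

Definition spans (I : {set 'I_N}) (j k : 'I_N) (w : T) : bool :=
  bridge [pred i in I | i < j] [pred l in I | k < l] j k w.

Lemma spans_choice (w0 : T) (I : {set 'I_N}) :
  {in I &, forall j k : 'I_N, j < k -> exists w, spans I j k w} ->
  exists omega : 'I_N -> 'I_N -> T, forall j k, j \in I -> k \in I -> j < k ->
    omega j k \in V j k /\
    forall i l, i \in I -> l \in I -> i < j -> k < l -> omega j k \in X i j k l.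
Proof.
move=> I_spans; exists (fun j k => odflt w0 [pick w | spans I j k w]) => j k jI kI jk.
case: pickP => [w /bridgeP[wV wX] | no_w]; last by have [w] := I_spans j k jI kI jk; rewrite no_w.
by split=> // i l iI lI ij kl; apply: wX; rewrite inE ?iI ?lI.
Qed.

Local Notation ordered := (sorted (fun i j : 'I_N => i < j)).

Fact ord_lt_trans : transitive (fun i j : 'I_N => i < j).
Proof. by move=> ? ? ?; apply: ltn_trans. Qed.

Fact ord_lt_irr : irreflexive (fun i j : 'I_N => i < j).
Proof. by move=> i; apply: ltnn. Qed.

Lemma sorted_enum_ord : ordered (enum 'I_N).
Proof. by move: (iota_ltn_sorted 0 N); rewrite -val_enum_ord sorted_map. Qed.

Lemma exists_spanned_set n t :
  ordered t -> 3 * n <= size t -> monochromatic (bridged n) (n + n.+2) t true ->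
  exists I : {set 'I_N},
    #|I| = n /\ {in I &, forall j k : 'I_N, j < k -> exists w, spans I j k w}.
Proof.
move=> t_sorted t_size t_mono.
have t_eq : t = take n t ++ take n (drop n t) ++ drop n (drop n t) by rewrite !cat_take_drop.
set M := take n (drop n t) in t_eq *.
have M_size : size M = n by rewrite size_takel // size_drop; lia.
exists [set i in M]; split.
  rewrite cardsE -M_size; apply/card_uniqP.
  exact: (sorted_uniq ord_lt_trans ord_lt_irr (take_sorted n (drop_sorted n t_sorted))).
move=> j k; rewrite !inE => jM kM jk.
have L_size : size (take n t) = n by rewrite size_takel //; lia.
have R_size : n <= size (drop n (drop n t)) by rewrite !size_drop; lia.
rewrite t_eq in t_sorted.
have [S [R [u_sub S_size {}R_size S_below R_above]]] :=
  sorted_window ord_lt_trans ord_lt_irr t_sorted L_size (eq_leq M_size) R_size jM kM jk.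
rewrite -t_eq in u_sub; have := t_mono _ u_sub.
rewrite size_cat /= S_size R_size => /(_ erefl).
rewrite -{1}S_size bridged_cat => /existsP[w /bridgeP[wV wX]].
exists w; apply/bridgeP; split=> // i l; rewrite !inE => /andP[iM ij] /andP[lM kl].
by apply: wX; [apply: S_below | apply: R_above].
Qed.

(* Room for j, k, the 2Kn indices before them and the 2K(n-1)2^(2Kn) + 1 indices after them
   that dense_bipartite_rectangle needs. *)
Definition bridge_bound K n := 2 * K * n + (2 * K * ((n - 1) * 2 ^ (2 * K * n))).+3.

Section Dense.

Variable K : nat.
Hypothesis K_gt0 : 0 < K.
Hypothesis V_neq0 : forall j k : 'I_N, j < k -> V j k != set0.
Hypothesis X_dense : forall i j k l : 'I_N, i < j -> j < k -> k < l ->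
  X i j k l \subset V j k /\ #|V j k| <= K * #|X i j k l|.

Lemma exists_bridged_subseq n t : ordered t -> bridge_bound K n <= size t ->
  exists u, [/\ subseq u t, size u = n + n.+2 & bridged n u].
Proof.
rewrite /bridge_bound => t_sorted t_size.
set a := 2 * K * n in t_size; set b := (2 * K * ((n - 1) * 2 ^ a)).+1.
have [j [k [t' t_eq]]] : exists j k t', t = take a t ++ j :: k :: t'.
  case t_drop: (drop a t) => [|j [|k t']];
    have := size_drop a t; rewrite t_drop /=; try lia.
  by exists j, k, t'; rewrite -t_drop cat_take_drop.
set A := take a t in t_eq.
have A_size : size A = a by rewrite size_takel //; lia.
have t'_size : b <= size t' by move: (congr1 size t_eq); rewrite size_cat A_size /=; lia.
have sorted_split : ordered (A ++ j :: k :: t') by rewrite -t_eq.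
have [A_j jt'] := sorted_cat_cons_bounds ord_lt_trans sorted_split.
have jk : j < k by apply: jt'; rewrite mem_head.
move: sorted_split; rewrite -cat1s catA => /(sorted_cat_cons_bounds ord_lt_trans)[_ k_t'].
pose B := take b t'.
pose pairs := [seq (i, l) | l <- B, i <- A].
have pairs_dense :
    {in pairs, forall p, X p.1 j k p.2 \subset V j k /\ #|V j k| <= K * #|X p.1 j k p.2|}.
  move=> _ /allpairsP[[l i] [/= lB iA ->]]; apply: X_dense; [exact: A_j | exact: jk |].
  exact/k_t'/(mem_take lB).
have [w wV w_many] := exists_rich_point (V_neq0 jk) pairs_dense.
rewrite size_allpairs mulnC in w_many.
have A_bound : 2 * K * n <= size A by rewrite A_size.
have B_bound : 2 * K * ((n - 1) * 2 ^ size A) < size B by rewrite A_size size_takel.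
have [S [R [SA RB S_size R_size SR]]] :=
  dense_bipartite_rectangle (e := fun i l => w \in X i j k l) K_gt0 A_bound B_bound w_many.
exists (S ++ j :: k :: R); split.
- rewrite t_eq; apply: cat_subseq SA _; rewrite /= !eqxx.
  exact: subseq_trans RB (take_subseq _ _).
- by rewrite size_cat /= S_size R_size.
- rewrite -{1}S_size bridged_cat; apply/existsP; exists w; apply/bridgeP.
  by split=> // i l iS lR; apply: SR.
Qed.

End Dense.

End Bridges.

Local Open Scope ring_scope.

Lemma exists_inv_density_bound (R : archiRealFieldType) (delta : R) : 0 < delta ->
  exists K : nat, (0 < K)%N /\ forall v x : nat, delta * v%:R <= x%:R -> (v <= K * x)%N.
Proof.
move=> delta_gt0; exists (Num.bound delta^-1).+1; split=> // v x le_vx.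
have inv_le : delta^-1 <= (Num.bound delta^-1).+1%:R.
  by rewrite ltW // (lt_le_trans (archi_boundP _)) ?ler_nat ?invr_ge0 ?ltW.
rewrite -(ler_nat R) natrM.
have -> : v%:R = delta^-1 * (delta * v%:R) :> R by rewrite mulrA mulVf ?mul1r ?gt_eqF.
apply: le_trans (ler_wpM2l _ le_vx) (ler_wpM2r _ inv_le); by rewrite ?invr_ge0 ?ler0n ?ltW.
Qed.

Theorem lemma4p7 (R : realType) (delta : R) (n : nat) : 0 < delta ->
  exists N : nat, forall (T : finType) (V : 'I_N -> 'I_N -> {set T})
    (E : {set {set T}}) (X : 'I_N -> 'I_N -> 'I_N -> 'I_N -> {set T}),
    partitioned_hypergraph V E ->
    (forall i j k l : 'I_N, (i < j)%N -> (j < k)%N -> (k < l)%N ->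
       X i j k l \subset V j k /\ delta * #|V j k|%:R <= #|X i j k l|%:R) ->
    exists (I : {set 'I_N}) (omega : 'I_N -> 'I_N -> T),
      #|I| = n /\
      forall j k : 'I_N, j \in I -> k \in I -> (j < k)%N ->
        omega j k \in V j k /\
        forall i l : 'I_N, i \in I -> l \in I -> (i < j)%N -> (k < l)%N ->
          omega j k \in X i j k l.
Proof.
move=> delta_gt0.
have [K [K_gt0 K_dense]] := exists_inv_density_bound delta_gt0.
have [N ramseyN] := ramsey (n + n.+2) (3 * n + bridge_bound K n).
exists N => T V _ X [V_neq0 _] X_delta.
have X_dense (i j k l : 'I_N) : (i < j)%N -> (j < k)%N -> (k < l)%N ->
    X i j k l \subset V j k /\ (#|V j k| <= K * #|X i j k l|)%N.
  by move=> ij jk kl; have [? /K_dense] := X_delta i j k l ij jk kl.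
have [t [c [t_sub t_size t_mono]]] :=
  ramseyN _ (bridged V X n) (enum 'I_N) (eq_leq (esym (size_enum_ord N))).
have t_sorted := subseq_sorted (@ord_lt_trans N) t_sub (sorted_enum_ord N).
case: c t_mono => t_mono; last first.
  have long_t : (bridge_bound K n <= size t)%N by rewrite t_size leq_addl.
  have [u [u_sub u_size]] := exists_bridged_subseq K_gt0 V_neq0 X_dense t_sorted long_t.
  by rewrite t_mono.
have long_t : (3 * n <= size t)%N by rewrite t_size leq_addr.
have [I [I_size I_spans]] := exists_spanned_set t_sorted long_t t_mono.
have N_gt1 : (1 < N)%N.
  by rewrite -(size_enum_ord N) (leq_trans _ (size_subseq t_sub)) // t_size /bridge_bound !addnS.
have [w0 _] := set0Pn _ (V_neq0 (Ordinal (ltnW N_gt1)) (Ordinal N_gt1) isT).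
have [omega omegaP] := spans_choice w0 I_spans.
by exists I, omega.
Qed.
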